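(* Let $\mathcal{C}\subseteq\mathbb{F}^n$ be an $\mathbb{F}$-linear code of dimension $k$ and let $M_{\mathcal{C}}=(\mathbf{K}^{\mathbf{n}},\rho_{\mathcal{C}})$ be the associated sum-matroid. Then for $i=1,\dots,k$, $d^S_i(M_{\mathcal{C}})=d_{SR,i}(\mathcal{C})$.
   Context: Setting: $\ell,n_1,\dots,n_\ell$ positive integers, $K_1,\dots,K_\ell$ finite fields with a common finite extension $\mathbb{F}$, $m_i=[\mathbb{F}:K_i]$, $n=\sum n_i$. $\mathcal{P}(\mathbf{K}^{\mathbf{n}})=\mathcal{P}(K_1^{n_1})\times\cdots\times\mathcal{P}(K_\ell^{n_\ell})$, $\mathcal{P}(K_i^{n_i})$ the lattice of $K_i$-subspaces of $K_i^{n_i}$, with componentwise inclusion; $\mathrm{Rk}(\mathcal{L})=\sum_i\dim_{K_i}\mathcal{L}_i$; $\mathbf{K}^{\mathbf{n}}=(K_1^{n_1},\dots,K_\ell^{n_\ell})$. For $\mathbf{c}=(\mathbf{c}^{(1)},\dots,\mathbf{c}^{(\ell)})\in\mathbb{F}^n$, $\mathbf{c}^{(i)}\in\mathbb{F}^{n_i}$, let $\Gamma_i(\mathbf{c}^{(i)})$ be the $m_i\times n_i$ matrix over $K_i$ whose columns are the coordinate vectors of the entries of $\mathbf{c}^{(i)}$ w.r.t. a fixed basis of $\mathbb{F}/K_i$; $\mathrm{supp}(\mathbf{c})=(E_1,\dots,E_\ell)$ with $E_i$ the $K_i$-row space of $\Gamma_i(\mathbf{c}^{(i)})$. For $\mathcal{L}\in\mathcal{P}(\mathbf{K}^{\mathbf{n}})$,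 $\mathcal{V}_{\mathcal{L}}=\{\mathbf{c}\in\mathbb{F}^n:\mathrm{supp}(\mathbf{c})\subseteq\mathcal{L}\}$ (an $\mathbb{F}$-subspace). The $i$-th generalized sum-rank weight is $d_{SR,i}(\mathcal{C})=\min\{\mathrm{Rk}(\mathcal{L}):\mathcal{L}\in\mathcal{P}(\mathbf{K}^{\mathbf{n}}),\ \dim_{\mathbb{F}}(\mathcal{C}\cap\mathcal{V}_{\mathcal{L}})\ge i\}$. $\mathcal{C}^\perp$ is the dual of $\mathcal{C}$ in $\mathbb{F}^n$. For $\mathcal{L}=(\mathcal{L}_1,\dots,\mathcal{L}_\ell)$ with $N_i=\dim_{K_i}\mathcal{L}_i$, $N=\sum N_i$, let $\mathbf{A}_i$ be an $N_i\times n_i$ generator matrix of $\mathcal{L}_i$ over $K_i$, $\mathbf{A}=\mathrm{diag}(\mathbf{A}_1,\dots,\mathbf{A}_\ell)$, $\Pi_{\mathcal{L}}(\mathbf{x})=\mathbf{x}\mathbf{A}^T\in\mathbb{F}^N$, and $\rho_{\mathcal{C}}(\mathcal{L})=\dim_{\mathbb{F}}\Pi_{\mathcal{L}}(\mathcal{C}^\perp)$. For a sum-matroid $M$ with rank function $\rho$, its nullity is $\eta(\mathcal{L})=\mathrm{Rk}(\mathcal{L})-\rho(\mathcal{L})$ and its $i$-th generalized weight is $d^S_i(M)=\min\{\mathrm{Rk}(\mathcal{L}):\mathcal{L}\in\mathcal{P}(\mathbf{K}^{\mathbf{n}}),\ \eta(\mathcal{L})=i\}$ for $i=1,\dots,\eta(\mathbf{K}^{\mathbf{n}})$.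 *)

From HB Require Import structures.
From mathcomp Require Import all_boot all_order all_algebra.
Unset Strict Implicit. Unset Printing Implicit Defensive.
Import GRing.Theory.
Local Open Scope ring_scope.

(* Setting: l blocks; block i has length n i and base field K i (a finite
   field), embedded in the common finite extension F by the field morphism
   emb i.  b i : 'I_(m i) -> F is the fixed K_i-basis of F (hypothesis
   [is_basis] in the theorem), so m i = [F : K_i].
   Vectors of F^n (n = sum n_i) are row vectors 'rV[F]_(\sum_i n i); the
   i-th block c^(i) is [submxrow c i].
   A K_i-subspace of K_i^{n_i} is represented (mxalgebra style) by a square
   matrix whose row space is that subspace. *)

Section SumRank.
Variables (F : finFieldType) (l : nat) (n : 'I_l -> nat) (K : 'I_l -> finFieldType)
  (emb : forall i, {rmorphism K i -> F}) (m : 'I_l -> nat)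
  (b : forall i, 'I_(m i) -> F).

Definition totlen := (\sum_(i < l) n i)%N.

Definition is_basis (i : 'I_l) : Prop :=
  forall x : F, exists! a : 'rV[K i]_(m i), x = \sum_(r < m i) emb i (a ord0 r) * b i r.

(* Gamma_i(v): the m_i x n_i matrix over K_i whose j-th column is the
   coordinate vector of v_j w.r.t. the basis b i. *)
Definition Gamma (i : 'I_l) (v : 'rV[F]_(n i)) : 'M[K i]_(m i, n i) :=
  odflt 0 [pick G : 'M[K i]_(m i, n i) |
            [forall j, v ord0 j == \sum_(r < m i) emb i (G r j) * b i r]].

(* elements of P(K^n): families of subspaces *)
Definition lat := forall i : 'I_l, 'M[K i]_(n i).

Definition Rk (L : lat) : nat := (\sum_(i < l) \rank (L i))%N.

(* supp(c) \subseteq L : for each i, the row space of Gamma_i(c^(i)) is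
   contained in L_i *)
Definition supp_sub (c : 'rV[F]_totlen) (L : lat) : bool :=
  [forall i, (Gamma i (@submxrow _ _ n 1 c i) <= L i)%MS].

(* V_L as an F-subspace of F^n (span of the set {c | supp(c) <= L}, which
   is already a subspace) *)
Definition VL (L : lat) : 'M[F]_totlen :=
  (\sum_(c : 'rV[F]_totlen | supp_sub c L) <<c>>)%MS.

Definition dual (C : 'M[F]_totlen) : 'M[F]_totlen := kermx C^T.

(* Pi_L(X) = X A^T with A = diag(A_1,...,A_l), A_i = row_base (L i) a
   generator matrix of L_i, applied to all rows of X *)
Definition PiL (L : lat) k (X : 'M[F]_(k, totlen)) :
  'M[F]_(k, \sum_(i < l) \rank (L i)) :=
  \mxrow_(i < l) (@submxrow _ _ n k X i *m (map_mx (emb i) (row_base (L i)))^T).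

Definition rhoC (C : 'M[F]_totlen) (L : lat) : nat := \rank (PiL L totlen (dual C)).

Definition is_dSR (C : 'M[F]_totlen) (t : nat) (d : nat) : Prop :=
  (exists L : lat, Rk L = d /\ (t <= \rank (C :&: VL L)%MS)%N) /\
  (forall L : lat, (t <= \rank (C :&: VL L)%MS)%N -> (d <= Rk L)%N).

Definition nullity (rho : lat -> nat) (L : lat) : nat := (Rk L - rho L)%N.

Definition is_dS (rho : lat -> nat) (t : nat) (d : nat) : Prop :=
  (exists L : lat, Rk L = d /\ nullity rho L = t) /\
  (forall L : lat, nullity rho L = t -> (d <= Rk L)%N).

End SumRank.

From HB Require Import structures.
From mathcomp Require Import all_boot all_order all_algebra.
From Stdlib Require Import Classical Wf_nat.
Unset Strict Implicit. Unset Printing Implicit Defensive.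
Import GRing.Theory.
Local Open Scope ring_scope.

(* V_L is the row space of the block-diagonal matrix diag(A_1, ..., A_l) whose
   blocks generate the L_i (lifted to F); hence dim V_L = Rk L and
   Pi_L(x) = x diag(A_i)^T.  Dimension counting then gives
   eta(L) = Rk L - rho_C(L) = dim (C cap V_L), so the two generalized weights
   minimize Rk L under eta(L) = t and eta(L) >= t respectively.  The minima
   agree because a minimizer of the second problem satisfies eta(L) = t:
   removing one dimension from some L_i lowers eta by at most one. *)

Lemma ex_minimizer (T : Type) (P : T -> Prop) (r : T -> nat) :
  (exists x, P x) -> exists x, P x /\ forall y, P y -> (r x <= r y)%N.
Proof.
case=> x Px.
have [d [[[y [Py <-]] ry_min] _]] :=
  @dec_inh_nat_subset_has_unique_least_element
    (fun d => exists y, P y /\ r y = d) (fun d => classic _)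
    (ex_intro _ (r x) (ex_intro _ x (conj Px erefl))).
by exists y; split=> // z Pz; apply/leP/ry_min; exists z.
Qed.

Lemma kermx_trK {F : fieldType} {m n} (C : 'M[F]_(m, n)) :
  (kermx (kermx C^T)^T :=: C)%MS.
Proof.
have sC : (C <= kermx (kermx C^T)^T)%MS.
  by rewrite sub_kermx -[C in C *m _]trmxK -trmx_mul mulmx_ker trmx0.
apply/eqmx_sym/eqmxP; rewrite -(mxrank_leqif_eq sC) eqn_leq mxrankS //=.
by rewrite mxrank_ker mxrank_tr mxrank_ker mxrank_tr subKn ?rank_leq_col.
Qed.

Lemma mxrank_capS_leq {F : fieldType} {m1 m2 m3 n}
    (C : 'M[F]_(m1, n)) (V : 'M_(m2, n)) (W : 'M_(m3, n)) :
  (W <= V)%MS -> (\rank (C :&: V) + \rank W <= \rank (C :&: W) + \rank V)%N.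
Proof.
move=> sWV; rewrite -(mxrank_sum_cap (C :&: V)%MS W) [X in (_ <= X)%N]addnC.
apply: leq_add; apply: mxrankS; first by rewrite addsmx_sub capmxSr.
by rewrite capmxS ?capmxSl.
Qed.

Definition hyperplanemx {F : fieldType} {n} (A : 'M[F]_n) : 'M[F]_n :=
  <<(pid_mx (\rank A).-1 : 'M_(\rank A)) *m row_base A>>%MS.

Lemma hyperplanemx_sub {F : fieldType} {n} (A : 'M[F]_n) : (hyperplanemx A <= A)%MS.
Proof. by rewrite genmxE (submx_trans (submxMl _ _)) ?eq_row_base. Qed.

Lemma mxrank_hyperplanemx {F : fieldType} {n} (A : 'M[F]_n) :
  \rank (hyperplanemx A) = (\rank A).-1.
Proof. by rewrite genmxE mxrankMfree ?row_base_free // rank_pid_mx ?leq_pred. Qed.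

Section SumRankSupports.
Variables (F : finFieldType) (l : nat) (n : 'I_l -> nat) (K : 'I_l -> finFieldType)
  (emb : forall i, {rmorphism K i -> F}) (m : 'I_l -> nat)
  (b : forall i, 'I_(m i) -> F).
Hypothesis hb : forall i, is_basis F l K emb m b i.
Set Implicit Arguments.

Local Notation lat := (lat l n K).
Local Notation Rk := (Rk l n K).
Local Notation Gamma := (Gamma F l n K emb m b).
Local Notation VL := (VL F l n K emb m b).
Local Notation supp_sub := (supp_sub F l n K emb m b).

Lemma coord_basis i (v : 'rV[F]_(n i)) :
  exists G : 'M[K i]_(m i, n i),
    forall j, v ord0 j = \sum_(r < m i) emb i (G r j) * b i r.
Proof.
have /fin_all_exists [a Ha] : forall j : 'I_(n i), exists a : 'rV[K i]_(m i),
    v ord0 j = \sum_(r < m i) emb i (a ord0 r) * b i r.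
  by move=> j; have [a [Ha _]] := hb i (v ord0 j); exists a.
exists (\matrix_(r, j) a j ord0 r) => j.
by rewrite Ha; apply: eq_bigr => r _; rewrite mxE.
Qed.

Lemma GammaE i (v : 'rV[F]_(n i)) j :
  v ord0 j = \sum_(r < m i) emb i (Gamma i v r j) * b i r.
Proof.
rewrite /Gamma; case: pickP => [G /forallP/(_ j)/eqP //|noG].
have [G HG] := coord_basis v.
by have /forallPn[j'] := negbT (noG G); rewrite HG eqxx.
Qed.

Lemma Gamma_unique i (v : 'rV[F]_(n i)) (G : 'M[K i]_(m i, n i)) :
  (forall j, v ord0 j = \sum_(r < m i) emb i (G r j) * b i r) -> Gamma i v = G.
Proof.
move=> HG; apply/matrixP => r j.
have [a [_ a_uniq]] := hb i (v ord0 j).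
have coordE (H : 'M[K i]_(m i, n i)) :
    v ord0 j = \sum_(s < m i) emb i (H s j) * b i s -> \row_s H s j = a.
  by move=> vE; apply/esym/a_uniq; rewrite vE; apply: eq_bigr => s _; rewrite mxE.
have /rowP/(_ r) := etrans (coordE _ (GammaE v j)) (esym (coordE _ (HG j))).
by rewrite !mxE.
Qed.

Lemma Gamma_submx i (v : 'rV[F]_(n i)) r (R : 'M[K i]_(r, n i)) :
  (Gamma i v <= R)%MS = (v <= map_mx (emb i) R)%MS.
Proof.
apply/idP/idP.
- case/submxP => D GE.
  have -> : v = \sum_(s < m i) b i s *: row s (map_mx (emb i) (Gamma i v)).
    apply/rowP => j; rewrite GammaE summxE; apply: eq_bigr => s _.
    by rewrite !mxE mulrC.
  apply: summx_sub => s _; apply: scalemx_sub.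
  by rewrite GE map_mxM row_mul submxMl.
- case/submxP => u ->.
  have /fin_all_exists [a Ha] : forall s : 'I_r, exists a : 'rV[K i]_(m i),
      u ord0 s = \sum_(t < m i) emb i (a ord0 t) * b i t.
    by move=> s; have [a [Ha _]] := hb i (u ord0 s); exists a.
  suff -> : Gamma i (u *m map_mx (emb i) R) = (\matrix_(t, s) a s ord0 t) *m R.
    exact: submxMl.
  apply: Gamma_unique => j; rewrite !mxE.
  under eq_bigr do rewrite Ha mulr_suml.
  rewrite exchange_big /=; apply: eq_bigr => t _.
  rewrite !mxE rmorph_sum mulr_suml; apply: eq_bigr => s _.
  by rewrite !mxE rmorphM /= mulrAC.
Qed.

Definition liftmx (L : lat) i : 'M[F]_(\rank (L i), n i) :=
  map_mx (emb i) (row_base (L i)).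

Definition latmx (L : lat) : 'M[F]_(\sum_(i < l) \rank (L i), totlen l n) :=
  \mxblock_(i, j) (if i == j then conform_mx 0 (liftmx L i) else 0).

Lemma mul_latmx (L : lat) (y : 'rV[F]_(\sum_(i < l) \rank (L i))) :
  y *m latmx L = \mxrow_j (submxrow y j *m liftmx L j).
Proof.
rewrite -{1}(submxrowK y) mul_mxrow_mxblock; apply/eq_mxrowP => j.
rewrite (bigD1 j) //= eqxx conform_mx_id big1 ?addr0 // => i /negbTE.
by rewrite eq_sym => ->; rewrite mulmx0.
Qed.

Lemma PiLE (L : lat) k (X : 'M[F]_(k, totlen l n)) :
  PiL F l n K emb L k X = X *m (latmx L)^T.
Proof.
rewrite tr_mxblock -{2}(submxrowK X) mul_mxrow_mxblock; apply/eq_mxrowP => j.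
rewrite (bigD1 j) //= eqxx conform_mx_id big1 ?addr0 // => i /negbTE.
by rewrite eq_sym => ->; rewrite trmx0 mulmx0.
Qed.

Lemma row_free_liftmx (L : lat) i : row_free (liftmx L i).
Proof. by rewrite /row_free mxrank_map; apply: row_base_free. Qed.

Lemma row_free_latmx (L : lat) : row_free (latmx L).
Proof.
rewrite -kermx_eq0; apply/rowV0P => y; rewrite sub_kermx mul_latmx => /eqP y0.
apply/mxrowP => j; rewrite submxrow0.
have /eqP := congr1 (fun M => submxrow M j) y0; rewrite mxrowK submxrow0.
by rewrite mulmx_free_eq0 ?row_free_liftmx // => /eqP.
Qed.

Lemma submx_latmx (L : lat) (c : 'rV[F]_(totlen l n)) :
  (c <= latmx L)%MS = supp_sub c L.
Proof.
have liftmxE j : (liftmx L j :=: map_mx (emb j) (L j))%MS.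
  by apply/map_eqmx; apply: eq_row_base.
apply/idP/forallP.
- case/submxP => y -> j; rewrite mul_latmx mxrowK Gamma_submx -liftmxE.
  exact: submxMl.
- move=> cL; have cLj j : (submxrow c j <= liftmx L j)%MS.
    by rewrite liftmxE -Gamma_submx.
  suff -> : c = \mxrow_j (submxrow c j *m pinvmx (liftmx L j)) *m latmx L.
    exact: submxMl.
  by rewrite mul_latmx; apply/mxrowP => j; rewrite !mxrowK mulmxKpV.
Qed.

Lemma VL_latmx (L : lat) : (VL L :=: latmx L)%MS.
Proof.
apply/eqmxP/andP; split.
- by apply/sumsmx_subP => c cL; rewrite genmxE submx_latmx.
- apply/row_subP => r; apply: (sumsmx_sup (row r (latmx L))).
    by rewrite -submx_latmx row_sub.
  by rewrite genmxE.
Qed.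

Lemma mxrank_VL (L : lat) : \rank (VL L) = Rk L.
Proof. by rewrite VL_latmx; apply/eqP/row_free_latmx. Qed.

Lemma nullity_rhoC (C : 'M[F]_(totlen l n)) (L : lat) :
  nullity l n K (rhoC F l n K emb C) L = \rank (C :&: VL L)%MS.
Proof.
rewrite /nullity /rhoC PiLE -mxrank_tr trmx_mul trmxK -mxrank_VL VL_latmx.
rewrite -(mxrank_mul_ker (latmx L) (dual F l n C)^T) addKn capmxC.
by rewrite (cap_eqmx (kermx_trK C) (eqmx_sym (VL_latmx L))).
Qed.

Lemma VL_monotone (L L' : lat) : (forall i, (L' i <= L i)%MS) -> (VL L' <= VL L)%MS.
Proof.
move=> sL'L; apply/sumsmx_subP => c cL'; apply: (sumsmx_sup c) => //.
by apply/forallP => i; apply: submx_trans (sL'L i); apply: (forallP cL' i).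
Qed.

Definition lat1 : lat := fun i => 1%:M.

Lemma cap_VL1 (C : 'M[F]_(totlen l n)) : (C :&: VL lat1 :=: C)%MS.
Proof.
apply/capmx_idPl/submx_full.
by rewrite /row_full mxrank_VL /Rk; under eq_bigr do rewrite mxrank1.
Qed.

Definition latD1 (L : lat) i : lat :=
  fun j => if j == i then hyperplanemx (L j) else L j.

Lemma latD1_sub (L : lat) i j : (latD1 L i j <= L j)%MS.
Proof. by rewrite /latD1; case: eqP => _; rewrite ?hyperplanemx_sub. Qed.

Lemma Rk_latD1 (L : lat) i : (0 < \rank (L i))%N -> (Rk (latD1 L i)).+1 = Rk L.
Proof.
move=> Li_gt0; rewrite /Rk (bigD1 i) //= [in RHS](bigD1 i) //= /latD1 eqxx.
rewrite mxrank_hyperplanemx -addSn prednK //; congr (_ + _)%N.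
by apply: eq_bigr => j /negbTE ->.
Qed.

Lemma cap_VL_shrink (C : 'M[F]_(totlen l n)) (L : lat) : (0 < Rk L)%N ->
  exists L' : lat, (Rk L').+1 = Rk L /\
    (\rank (C :&: VL L) <= (\rank (C :&: VL L')).+1)%N.
Proof.
move=> RkL_gt0; have [i Li_gt0] : exists i, (0 < \rank (L i))%N.
  apply/existsP; apply: contraLR RkL_gt0 => /existsPn Li0.
  by rewrite -eqn0Ngt sum_nat_eq0; apply/forallP => i; rewrite eqn0Ngt Li0.
exists (latD1 L i); split; first exact: Rk_latD1.
have := mxrank_capS_leq C _ _ (VL_monotone (latD1_sub L i)).
by rewrite !mxrank_VL -(Rk_latD1 Li_gt0) addnS -addSn leq_add2r.
Qed.

End SumRankSupports.

Theorem mainTheorem8 (F : finFieldType) (l : nat) (n : 'I_l -> nat)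
  (K : 'I_l -> finFieldType) (emb : forall i, {rmorphism K i -> F})
  (m : 'I_l -> nat) (b : forall i, 'I_(m i) -> F)
  (hl : (0 < l)%N) (hn : forall i, (0 < n i)%N)
  (hb : forall i, is_basis F l K emb m b i)
  (C : 'M[F]_(totlen l n)) (k : nat) (hk : \rank C = k) :
  forall t : nat, (1 <= t <= k)%N ->
    exists d : nat,
      is_dS l n K (rhoC F l n K emb C) t d /\ is_dSR F l n K emb m b C t d.
Proof.
move=> t /andP[_ t_le_k].
pose eta L := \rank (C :&: VL F l n K emb m b L)%MS.
have [L [t_le_etaL L_min]] : exists L, (t <= eta L)%N /\
    forall L', (t <= eta L')%N -> (Rk l n K L <= Rk l n K L')%N.
  by apply: ex_minimizer; exists (lat1 n K); rewrite /eta (cap_VL1 hb) hk.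
have etaL : eta L = t.
  apply/eqP; rewrite eqn_leq t_le_etaL andbT leqNgt; apply/negP => t_lt_etaL.
  have RkL_gt0 : (0 < Rk l n K L)%N.
    have etaL_le : (eta L <= Rk l n K L)%N by rewrite -(mxrank_VL hb) mxrankS ?capmxSr.
    exact: leq_trans (leq_ltn_trans (leq0n t) t_lt_etaL) etaL_le.
  have [L' [RkL' etaL']] := cap_VL_shrink hb C RkL_gt0.
  suff /L_min : (t <= eta L')%N by rewrite -RkL' ltnn.
  by rewrite -ltnS (leq_trans t_lt_etaL etaL').
exists (Rk l n K L); split; split.
- by exists L; rewrite (nullity_rhoC hb).
- by move=> L'; rewrite (nullity_rhoC hb) => etaL'; apply: L_min; rewrite /eta etaL'.
- by exists L; rewrite -/(eta L) etaL.
- exact: L_min.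
Qed.
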